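(* Let $p$ be a prime and let $f$ be one of the following automorphisms of $A=\mathbb{Z}_{p^2}\times\mathbb{Z}_p$ (writing elements as $(x,y)$ with $x\in\mathbb{Z}_{p^2}$, $y\in\mathbb{Z}_p$): $D(b,c):(x,y)\mapsto(bx,cy)$ with $0<b<p^2-1$, $b\not\equiv 0,1\pmod p$, $1<c<p$; $G(b):(x,y)\mapsto(bx,\,x+by)$ with $1<b<p$; $H(b,c):(x,y)\mapsto(bx+py,\,cx+by)$ with $0<b<p$, $0\le c<p-1$. Suppose $Q=\mathrm{Aff}(A,f)$ is connected. Then $Q$ is simply connected if and only if $f$ is one of: (i) $D(b,c)$ with $bc\not\equiv 1\pmod p$; (ii) $G(b)$ with $b\not\equiv -1\pmod p$; (iii) $H(b,c)$ with $b\not\equiv -1\pmod p$.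
   Context: A quandle is a set $Q$ with a binary operation $*$ such that every left translation $L_x:y\mapsto x*y$ is bijective, $x*(y*z)=(x*y)*(x*z)$ and $x*x=x$. For an abelian group $A$ and $f\in\mathrm{Aut}(A)$, $\mathrm{Aff}(A,f)$ is $A$ with $x*y=x+f(y-x)$. $Q$ is connected if $\langle L_x:x\in Q\rangle$ is transitive on $Q$. Every connected affine quandle over $\mathbb{Z}_{p^2}\times\mathbb{Z}_p$ is isomorphic to $\mathrm{Aff}(A,f)$ for $f$ in the list above. For a set $S$, a quandle cocycle with values in $\mathrm{Sym}_S$ is $\theta:Q\times Q\to\mathrm{Sym}_S$ with $\theta_{x*y,x*z}\theta_{x,z}=\theta_{x,y*z}\theta_{y,z}$ and $\theta_{x,x}=1$; it is cohomologous to the trivial cocycle if there is $\gamma:Q\to\mathrm{Sym}_S$ with $\theta_{x,y}=\gamma_{x*y}\gamma_y^{-1}$ for all $x,y$. $Q$ is simply connected if it is connected and, for every set $S$, every such cocycle is cohomologous to the trivial cocycle. *)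

From HB Require Import structures.
From mathcomp Require Import all_boot all_order all_algebra.
Set Implicit Arguments. Unset Strict Implicit. Unset Printing Implicit Defensive.
Import GRing.Theory.
Local Open Scope ring_scope.

Section QuandleDefs.
Variables (Q : Type) (op : Q -> Q -> Q).

Definition is_quandle : Prop :=
  [/\ forall x, bijective (op x),
      forall x y z, op x (op y z) = op (op x y) (op x z)
    & forall x, op x x = x].

(** Orbit of [x] under the group generated by the left translations
    [L_z : y |-> op z y] (words in the L_z and their inverses applied to x). *)
Inductive lt_orbit (x : Q) : Q -> Prop :=
| lt_orbit_refl : lt_orbit x x
| lt_orbit_fwd (y z : Q) : lt_orbit x y -> lt_orbit x (op z y)
| lt_orbit_bwd (y z : Q) : lt_orbit x (op z y) -> lt_orbit x y.

Definition qconnected : Prop := forall x y, lt_orbit x y.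

Definition quandle_cocycle (S : Type) (theta : Q -> Q -> S -> S) : Prop :=
  [/\ forall x y, bijective (theta x y),
      forall x y z s,
        theta (op x y) (op x z) (theta x z s) = theta x (op y z) (theta y z s)
    & forall x s, theta x x s = s].

Definition cohomologous_trivial (S : Type) (theta : Q -> Q -> S -> S) : Prop :=
  exists (gamma ginv : Q -> S -> S),
    (forall y, cancel (gamma y) (ginv y) /\ cancel (ginv y) (gamma y)) /\
    (forall x y s, theta x y s = gamma (op x y) (ginv y s)).

Definition simply_connected : Prop :=
  qconnected /\
  forall (S : Type) (theta : Q -> Q -> S -> S),
    quandle_cocycle theta -> cohomologous_trivial theta.

End QuandleDefs.

Definition aff_op (A : zmodType) (f : A -> A) (x y : A) : A := x + f (y - x).

Definition Ap (p : nat) : zmodType := ('Z_(p ^ 2) * 'Z_p)%type.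

Inductive aut_desc :=
| AutD of nat & nat
| AutG of nat
| AutH of nat & nat.

Definition valid_desc (p : nat) (d : aut_desc) : Prop :=
  match d with
  | AutD b c => [/\ (0 < b < p ^ 2 - 1)%N, (b %% p != 0)%N, (b %% p != 1)%N
                   & (1 < c < p)%N]
  | AutG b => (1 < b < p)%N
  | AutH b c => (0 < b < p)%N /\ (c < p - 1)%N
  end.

Definition red (p : nat) (x : 'Z_(p ^ 2)) : 'Z_p := (val x)%:R.
Definition pmul (p : nat) (y : 'Z_p) : 'Z_(p ^ 2) := (p * val y)%:R.

Definition desc_fun (p : nat) (d : aut_desc) : Ap p -> Ap p :=
  match d with
  | AutD b c => fun a => (b%:R * a.1, c%:R * a.2)
  | AutG b => fun a => (b%:R * a.1, @red p a.1 + b%:R * a.2)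
  | AutH b c => fun a => (b%:R * a.1 + @pmul p a.2, c%:R * @red p a.1 + b%:R * a.2)
  end.

Definition sc_condition (p : nat) (d : aut_desc) : Prop :=
  match d with
  | AutD b c => ((b * c) %% p != 1)%N
  | AutG b => ((b + 1) %% p != 0)%N
  | AutH b c => ((b + 1) %% p != 0)%N
  end.

(* Write f for the automorphism, tau = 1 - f, so that x * y = tau x + f y.
   Connectedness makes tau bijective; this rules out H(1,c), where tau kills (p,0).
   Given a cocycle theta, the left translations E_a (q,s) = (a * q, theta_{a,q} s) of
   the extension (extL) satisfy E_x E_y = E_{x*y} E_x, and the transvections
   T_x = E_x E_0^-1 satisfy T_x E_a = E_{a + tau x} T_x.  Hence the commutators
   [T_x, T_y] commute with every E_a and form a biadditive, alternating, f-invariant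
   pairing.  On Z_{p^2} x Z_p such a pairing is c^(x /\ y) with c = [T_e1, T_e2],
   c^p = 1, and f-invariance gives c^(det f) = c; so c = 1 when det f <> 1 (mod p).
   Then x |-> T_x is additive and gamma_y = T_(tau^-1 y) (0, -) trivializes theta.
   If det f = 1 (mod p), the form /\ is f-invariant and s |-> s + x /\ y is a cocycle,
   which can only be a coboundary if moreover trace f = 2 (mod p); together with
   det f = 1 this forces b = 1 (mod p), which the parameter ranges exclude.
   Conditions (i)-(iii) say exactly that det f <> 1 (mod p). *)

From HB Require Import structures.
From mathcomp Require Import all_boot all_order all_algebra.
From mathcomp Require Import ring.
From Stdlib Require Import IndefiniteDescription.
Set Implicit Arguments. Unset Strict Implicit. Unset Printing Implicit Defensive.
Import GRing.Theory.

Lemma iter_coprime_id (T : Type) (g : T -> T) m n :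
  coprime m n -> iter m g =1 id -> iter n g =1 id -> g =1 id.
Proof.
case: m => [|m] co_mn gm gn z.
  by move: co_mn gn; rewrite /coprime gcd0n => /eqP-> /(_ z).
have iterM_id k l : iter l g =1 id -> iter (k * l) g =1 id.
  by move=> gl x; rewrite iterM; apply/iter_fix/gl.
have [km kn def_km _] := egcdnP n (ltn0Sn m).
have := iterM_id km _ gm z.
by rewrite def_km (eqP co_mn) iterD iterM_id.
Qed.

Lemma iter_modn (T : Type) (g : T -> T) k n :
  iter k g =1 id -> iter (n %% k) g =1 iter n g.
Proof. by move=> gk z; rewrite {2}(divn_eq n k) iterD iterM (iter_fix _ (gk _)). Qed.

Lemma iter_prime_id (T : Type) (g : T -> T) p n :
  prime p -> iter p g =1 id -> iter n g =1 g -> n != 1 %[mod p] -> g =1 id.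
Proof.
move=> p_prime gp; case: n => [g0 _ z | k gk k_ne1]; first exact: esym (g0 z).
apply: (@iter_coprime_id _ _ p k _ gp) => [|z].
  rewrite prime_coprime //; apply: contra k_ne1 => /dvdnP[q ->].
  by rewrite -addn1 modnMDl.
have g_iter z' : g (iter p.-1 g z') = z' by rewrite -iterS prednK ?prime_gt0 ?gp.
by rewrite -[in LHS](g_iter z) -iterSr gk g_iter.
Qed.

Lemma det1_trace2 p b c :
  prime p -> b * c = 1 %[mod p] -> b + c = 2 %[mod p] -> b = 1 %[mod p].
Proof.
move=> p_prime det1 tr2.
have : b * b + 1 = b * 2 %[mod p].
  by rewrite -(modnDmr _ 1) -det1 modnDmr -mulnDr -modnMmr tr2 modnMmr.
case: b {tr2} det1 => [|b _]; first by rewrite mul0n mod0n modn_small ?prime_gt1.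
rewrite (_ : b.+1 * b.+1 + 1 = b ^ 2 + b.+1 * 2); last by ring.
rewrite -[X in _ = X %[mod p]]add0n => /eqP; rewrite eqn_modDr mod0n -/(p %| b ^ 2).
by rewrite Euclid_dvdX // => /andP[/dvdnP[k ->] _]; rewrite -addn1 modnMDl.
Qed.

Lemma sqrn_eq1_mod p b :
  prime p -> 1 < b < p -> (b * b == 1 %[mod p]) = (b + 1 == 0 %[mod p]).
Proof.
move=> p_prime /andP[b_gt1 b_lt_p].
rewrite eqn_mod_dvd ?muln_gt0 ?(ltnW b_gt1) // mod0n.
have -> : b * b - 1 = (b - 1) * (b + 1) by rewrite mulnBl mul1n mulnDr muln1 subnDA addnK.
rewrite Euclid_dvdM // gtnNdvd ?subn_gt0 //.
exact: leq_ltn_trans (leq_subr 1 b) b_lt_p.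
Qed.

Lemma surjF_bij (T : finType) (h : T -> T) : (forall y, exists x, y = h x) -> bijective h.
Proof.
move=> h_surj; have h_surjb y : exists x, h x == y by have [x ->] := h_surj y; exists x.
pose g y := xchoose (h_surjb y).
have gK : cancel g h := fun y => eqP (xchooseP (h_surjb y)).
have [g' _ g'K] := injF_bij (can_inj gK).
by exists g => // x; rewrite -{1}[x]g'K gK g'K.
Qed.

Lemma bij_family_inv (X S : Type) (g : X -> X -> S -> S) :
  (forall x y, bijective (g x y)) ->
  exists g_inv, (forall x y, cancel (g x y) (g_inv x y)) /\
                (forall x y, cancel (g_inv x y) (g x y)).
Proof.
move=> g_bij; have [h hP] : exists h : X * X -> S -> S,
    forall xy, cancel (g xy.1 xy.2) (h xy) /\ cancel (h xy) (g xy.1 xy.2).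
  apply: (functional_choice (fun xy h => cancel (g xy.1 xy.2) h /\ cancel h (g xy.1 xy.2))).
  by case=> x y; have [h gK hK] := g_bij x y; exists h.
by exists (fun x y => h (x, y)); split=> x y; have [] := hP (x, y).
Qed.

Local Open Scope ring_scope.

(** * Affine quandles and their cocycle extensions *)

Section AffineQuandle.
Variables (A : zmodType) (f : {additive A -> A}).

Definition tau x := x - f x.

Lemma tau0 : tau 0 = 0.
Proof. by rewrite /tau raddf0 subr0. Qed.

Lemma tauD x y : tau (x + y) = tau x + tau y.
Proof. by rewrite /tau raddfD opprD addrACA. Qed.

Lemma tauB x y : tau (x - y) = tau x - tau y.
Proof. by rewrite /tau raddfB !opprB addrACA [RHS]addrACA [- y + _]addrC. Qed.

Lemma tau_f x : tau (f x) = f (tau x).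
Proof. by rewrite /tau raddfB. Qed.

Lemma tauKf x : tau x + f x = x.
Proof. exact: subrK. Qed.

Lemma aff_opE x y : aff_op f x y = tau x + f y.
Proof. by rewrite /aff_op /tau raddfB addrA addrAC. Qed.

Lemma aff_op0 y : aff_op f 0 y = f y.
Proof. by rewrite aff_opE tau0 add0r. Qed.

Lemma aff_op_dist x y z :
  aff_op f x (aff_op f y z) = aff_op f (aff_op f x y) (aff_op f x z).
Proof. by rewrite !aff_opE tauD !(raddfD f (tau _)) [RHS]addrACA tauKf tau_f. Qed.

Variable finv : A -> A.
Hypotheses (fK : cancel f finv) (finvK : cancel finv f).

Lemma aff_op_finv a q : aff_op f a (a + finv (q - a)) = q.
Proof. by rewrite /aff_op [a + finv _]addrC addrK finvK addrC subrK. Qed.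

Lemma finv_aff_op a q : a + finv (aff_op f a q - a) = q.
Proof. by rewrite /aff_op [a + f _]addrC addrK fK addrC subrK. Qed.

Lemma tau_finv x : tau (finv x) = finv (tau x).
Proof. by apply: (can_inj fK); rewrite -tau_f !finvK. Qed.

Lemma lt_orbit0_tau y : lt_orbit (aff_op f) 0 y -> exists w, y = tau w.
Proof.
elim=> [|_ z _ [w ->]|y' z _ [w def_w]]; first by exists 0; rewrite tau0.
  by exists (z + f w); rewrite aff_opE tauD tau_f.
exists (finv (w - z)); rewrite tau_finv tauB -def_w aff_opE addrC addKr.
by rewrite fK.
Qed.

End AffineQuandle.

Section AlternatingPairing.
Variables (A : zmodType) (X : Type) (P : A -> A -> X -> X).
Hypothesis PDl : forall x y w z, P (x + y) w z = P y w (P x w z).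
Hypothesis PDr : forall x y w z, P x (y + w) z = P x y (P x w z).
Hypothesis Pxx : forall x z, P x x z = z.

Lemma pairing0r x z : P x 0 z = z.
Proof. by have := Pxx x z; rewrite -{2}[x]addr0 PDr Pxx. Qed.

Lemma pairing0l y z : P 0 y z = z.
Proof. by have := Pxx y z; rewrite -{1}[y]add0r PDl Pxx. Qed.

Lemma pairingMnl x y n z : P (x *+ n) y z = iter n (P x y) z.
Proof. by elim: n z => [|n IHn] z; rewrite ?pairing0l // mulrSr PDl IHn. Qed.

Lemma pairingMnr x y n z : P x (y *+ n) z = iter n (P x y) z.
Proof. by elim: n z => [|n IHn] z; rewrite ?pairing0r // mulrS PDr IHn. Qed.

Lemma pairingMn x y m n z : P (x *+ m) (y *+ n) z = iter (m * n) (P x y) z.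
Proof. by rewrite pairingMnl iterM; apply: eq_iter => w; rewrite pairingMnr. Qed.

Lemma pairing_swapK x y z : P y x (P x y z) = z.
Proof. by have := Pxx (x + y) z; rewrite PDl !PDr !Pxx. Qed.

End AlternatingPairing.

Section Extension.
Variables (A : zmodType) (f : {additive A -> A}) (finv : A -> A).
Hypotheses (fK : cancel f finv) (finvK : cancel finv f).
Variables (S : Type) (theta thinv : A -> A -> S -> S).
Hypotheses (thetaK : forall x y, cancel (theta x y) (thinv x y))
           (thinvK : forall x y, cancel (thinv x y) (theta x y)).
Hypothesis theta_cocycle : forall x y z s,
  theta (aff_op f x y) (aff_op f x z) (theta x z s)
  = theta x (aff_op f y z) (theta y z s).
Hypothesis theta_xx : forall x s, theta x x s = s.

Definition extL a (z : A * S) := (aff_op f a z.1, theta a z.1 z.2).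
Definition extL_inv a (z : A * S) :=
  let q := a + finv (z.1 - a) in (q, thinv a q z.2).

Lemma extLK a : cancel (extL a) (extL_inv a).
Proof.
by case=> q s; rewrite /extL_inv /extL /= (finv_aff_op fK) thetaK.
Qed.

Lemma extL_invK a : cancel (extL_inv a) (extL a).
Proof.
by case=> q s; rewrite /extL /extL_inv /= (aff_op_finv finvK) thinvK.
Qed.

Lemma extL_dist x y z : extL x (extL y z) = extL (aff_op f x y) (extL x z).
Proof. by rewrite /extL /= aff_op_dist theta_cocycle. Qed.

Lemma extL0_extL a z : extL 0 (extL a z) = extL (f a) (extL 0 z).
Proof. by rewrite extL_dist aff_op0. Qed.

Lemma extL_inv0_extL a z : extL_inv 0 (extL a z) = extL (finv a) (extL_inv 0 z).
Proof.
by apply: (can_inj (extLK 0)); rewrite extL0_extL finvK !extL_invK.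
Qed.

Definition transv x z := extL x (extL_inv 0 z).
Definition transv_inv x z := extL 0 (extL_inv x z).

Lemma transvK x : cancel (transv x) (transv_inv x).
Proof. by move=> z; rewrite /transv /transv_inv extLK extL_invK. Qed.

Lemma transv_invK x : cancel (transv_inv x) (transv x).
Proof. by move=> z; rewrite /transv /transv_inv extLK extL_invK. Qed.

Lemma transv0 z : transv 0 z = z.
Proof. exact: extL_invK. Qed.

Lemma transv_extL x a z : transv x (extL a z) = extL (a + tau f x) (transv x z).
Proof. by rewrite /transv extL_inv0_extL extL_dist aff_opE finvK addrC. Qed.

Lemma transv_inv_extL x a z :
  transv_inv x (extL a z) = extL (a - tau f x) (transv_inv x z).
Proof.
by apply: (can_inj (transvK x)); rewrite transv_invK transv_extL transv_invK subrK.
Qed.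

Lemma extL0_transv x z : extL 0 (transv x z) = transv (f x) (extL 0 z).
Proof. by rewrite /transv extL0_extL extLK extL_invK. Qed.

Lemma extL0_transv_inv x z : extL 0 (transv_inv x z) = transv_inv (f x) (extL 0 z).
Proof.
by apply: (can_inj (transvK (f x))); rewrite -extL0_transv !transv_invK.
Qed.

Definition central g := forall a z, g (extL a z) = extL a (g z).

Lemma central_extL_inv g a z : central g -> g (extL_inv a z) = extL_inv a (g z).
Proof. by move=> g_central; rewrite -{2}[z](extL_invK a) g_central extLK. Qed.

Lemma central_transv g x z : central g -> g (transv x z) = transv x (g z).
Proof. by move=> g_central; rewrite /transv g_central central_extL_inv. Qed.

Lemma central_transv_inv g x z :
  central g -> g (transv_inv x z) = transv_inv x (g z).
Proof. by move=> g_central; rewrite /transv_inv g_central central_extL_inv. Qed.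

Definition tcomm x y z := transv x (transv y (transv_inv x (transv_inv y z))).

Lemma tcomm_central x y : central (tcomm x y).
Proof.
move=> a z; rewrite /tcomm !transv_inv_extL !transv_extL.
by rewrite addrAC !subrK.
Qed.

Lemma tcomm_swapK x y z : tcomm y x (tcomm x y z) = z.
Proof. by rewrite /tcomm !transvK !transv_invK. Qed.

Lemma tcommxx x z : tcomm x x z = z.
Proof. by rewrite /tcomm !transv_invK. Qed.

Lemma central_tcomm g x y z : central g -> g (tcomm x y z) = tcomm x y (g z).
Proof.
move=> g_central.
by rewrite /tcomm !(central_transv _ _ g_central) !(central_transv_inv _ _ g_central).
Qed.

Lemma tcommDl x y w z : tcomm (x + y) w z = tcomm y w (tcomm x w z).
Proof.
(* T_(x+y) = k^-1 T_x T_y with k central, and central factors drop out of commutators. *)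
pose k z := transv x (transv y (transv_inv (x + y) z)).
pose k_inv z := transv (x + y) (transv_inv y (transv_inv x z)).
have kK : cancel k k_inv by move=> z'; rewrite /k /k_inv !transvK transv_invK.
have k_invK : cancel k_inv k by move=> z'; rewrite /k /k_inv !transvK !transv_invK.
have k_central : central k.
  move=> a z'; rewrite /k transv_inv_extL (transv_extL y) (transv_extL x).
  by rewrite tauD opprD (addrA a) !subrK.
have transvD z' : transv (x + y) z' = k_inv (transv x (transv y z')).
  by apply: (can_inj kK); rewrite k_invK /k transvK.
have transv_invD z' : transv_inv (x + y) z' = transv_inv y (transv_inv x (k z')).
  by rewrite /k !transvK.
have conj_y u : transv y (transv w (transv_inv y u)) = tcomm y w (transv w u).
  by rewrite /tcomm transvK.
rewrite /tcomm transvD transv_invD (central_transv_inv _ _ k_central) conj_y.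
rewrite -(central_transv _ _ (tcomm_central y w)) -/(tcomm x w (k z)).
by rewrite -!(central_tcomm _ _ _ k_central) kK.
Qed.

Lemma tcommDr x y w z : tcomm x (y + w) z = tcomm x y (tcomm x w z).
Proof.
by apply: (can_inj (tcomm_swapK (y + w) x)); rewrite tcomm_swapK tcommDl !tcomm_swapK.
Qed.

Lemma tcomm_f x y z : tcomm (f x) (f y) z = tcomm x y z.
Proof.
have tcomm_extL0 u : tcomm (f x) (f y) (extL 0 u) = tcomm x y (extL 0 u).
  rewrite /tcomm -!extL0_transv_inv -!extL0_transv -/(tcomm x y u).
  exact: (esym (tcomm_central x y 0 u)).
by rewrite -[z](extL_invK 0) tcomm_extL0.
Qed.

Section TrivialCommutators.
Variable tinv : A -> A.
Hypotheses (tauK : cancel (tau f) tinv) (tinvK : cancel tinv (tau f)).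
Hypothesis tcomm_id : forall x y z, tcomm x y z = z.

Lemma transvC x y z : transv x (transv y z) = transv y (transv x z).
Proof. by rewrite -(tcomm_id x y (transv y (transv x z))) /tcomm !transvK. Qed.

Lemma transv_aff_op x y z :
  transv x (transv (f y) z) = transv (aff_op f x y) (transv (f x) z).
Proof. by rewrite /transv !extL_inv0_extL !fK extL_dist. Qed.

Lemma transv_tau x z : transv x z = transv (tau f x) (transv (f x) z).
Proof. by have := transv_aff_op x 0 z; rewrite raddf0 transv0 aff_opE raddf0 addr0. Qed.

Lemma transvD a u z : transv (a + u) z = transv a (transv u z).
Proof.
set x := tinv a; have -> : a + u = aff_op f x (finv u) by rewrite aff_opE finvK tinvK.
rewrite -{1}[z](transv_invK (f x)) -transv_aff_op finvK transv_tau tinvK.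
by rewrite (transvC (f x) u) transv_invK.
Qed.

Lemma transv_fst w z : (transv w z).1 = z.1 + tau f w.
Proof. by rewrite /transv /extL /extL_inv /= add0r subr0 aff_opE finvK addrC. Qed.

Lemma extL_transv x w z : extL x (transv w z) = transv (x + f w) (extL 0 z).
Proof. by rewrite transvD -extL0_transv /transv extLK. Qed.

Lemma cohomologous_trivial_of_tcomm : cohomologous_trivial (aff_op f) theta.
Proof.
pose gamma y s := (transv (tinv y) (0, s)).2.
pose gamma_inv y s := (transv_inv (tinv y) (y, s)).2.
have transv_gamma y s : transv (tinv y) (0, s) = (y, gamma y s).
  by rewrite [LHS]surjective_pairing transv_fst add0r tinvK.
have transv_inv_gamma y s : transv_inv (tinv y) (y, s) = (0, gamma_inv y s).
  have := transv_fst (tinv y) (transv_inv (tinv y) (y, s)).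
  rewrite transv_invK tinvK /= => fst_y; rewrite [LHS]surjective_pairing.
  by congr (_, _); apply: (addIr y); rewrite -fst_y add0r.
have gammaK y : cancel (gamma y) (gamma_inv y).
  by move=> s; rewrite /gamma_inv -transv_gamma transvK.
have gamma_invK y : cancel (gamma_inv y) (gamma y).
  by move=> s; rewrite /gamma -transv_inv_gamma transv_invK.
exists gamma, gamma_inv; split=> [y | x y s]; first by [].
have tinv_aff_op : tinv (aff_op f x y) = x + f (tinv y).
  by rewrite -[RHS]tauK tauD tau_f tinvK aff_opE.
have extL0_0 t : extL 0 (0, t) = (0, t) by rewrite /extL /= aff_op0 raddf0 theta_xx.
have := extL_transv x (tinv y) (0, gamma_inv y s).
by rewrite extL0_0 -tinv_aff_op !transv_gamma gamma_invK => -[].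
Qed.

End TrivialCommutators.

End Extension.

(** * Cocycles from alternating forms *)

Lemma cohomologous_trivial_comp (Q S : Type) (op : Q -> Q -> Q) (theta : Q -> Q -> S -> S) :
  cohomologous_trivial op theta -> forall a b a' b' c s,
  op a (op b c) = op a' (op b' c) ->
  theta a (op b c) (theta b c s) = theta a' (op b' c) (theta b' c s).
Proof.
case=> gamma [gamma_inv [gammaK theta_gamma]] a b a' b' c s eq_op.
by rewrite !theta_gamma !(proj1 (gammaK _)) eq_op.
Qed.

Section BiadditiveCocycle.
Variables (A : zmodType) (f : {additive A -> A}) (R : comPzRingType).
Variable beta : A -> A -> R.
Hypotheses (betaBl : forall x y z, beta (x - y) z = beta x z - beta y z)
           (betaBr : forall x y z, beta x (y - z) = beta x y - beta x z).
Hypothesis beta_xx : forall x, beta x x = 0.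
Hypothesis beta_f : forall x y, beta (f x) (f y) = beta x y.

Lemma beta0l y : beta 0 y = 0.
Proof. by have := betaBl 0 0 y; rewrite !subrr. Qed.

Lemma beta0r x : beta x 0 = 0.
Proof. by have := betaBr x 0 0; rewrite !subrr. Qed.

Lemma betaNl x y : beta (- x) y = - beta x y.
Proof. by rewrite -sub0r betaBl beta0l sub0r. Qed.

Lemma betaNr x y : beta x (- y) = - beta x y.
Proof. by rewrite -sub0r betaBr beta0r sub0r. Qed.

Lemma betaDl x y z : beta (x + y) z = beta x z + beta y z.
Proof. by have := betaBl x (- y) z; rewrite opprK betaNl opprK. Qed.

Lemma betaDr x y z : beta x (y + z) = beta x y + beta x z.
Proof. by have := betaBr x y (- z); rewrite opprK betaNr opprK. Qed.

Lemma betaC x y : beta y x = - beta x y.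
Proof.
apply/eqP; rewrite -addr_eq0; have := beta_xx (x + y).
by rewrite betaDl !betaDr !beta_xx add0r addr0 addrC => ->.
Qed.

Definition beta_cocycle x y (s : R) := s + beta x y.

Lemma quandle_cocycle_beta : quandle_cocycle (aff_op f) beta_cocycle.
Proof.
split=> [x y | x y z s | x s]; last by rewrite /beta_cocycle beta_xx addr0.
  by exists (fun s => s - beta x y) => s; rewrite /beta_cocycle ?addrK ?subrK.
rewrite /beta_cocycle !aff_opE !(betaDl, betaDr, betaBl, betaBr, raddfB) /tau.
rewrite !(betaNl, betaNr) !beta_f !beta_xx (betaC x (f x)) (betaC x (f y)) (betaC x y).
ring.
Qed.

Lemma cohomologous_trivial_beta u v :
  cohomologous_trivial (aff_op f) beta_cocycle ->
  beta (f u) v + beta u (f v) = beta u v *+ 2.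
Proof.
(* (f u) * (v * 0) = (f v) * (u * 0) *)
move=> /cohomologous_trivial_comp/(_ (f u) v (f v) u 0 0).
rewrite /beta_cocycle !aff_opE raddf0 !addr0 !tau_f => /(_ (addrC _ _)).
rewrite !beta0r !add0r /tau !betaBr !beta_f (betaC u (f v)) (betaC u v) => eq_beta.
by rewrite -[beta (f u) v](subrK (beta u v)) eq_beta; ring.
Qed.

End BiadditiveCocycle.

(** * The automorphisms D, G, H of Z_{p^2} x Z_p *)

(* On the generators (1,0), (0,1), H(b,c) has determinant b^2 - pc = b^2 (mod p). *)
Definition desc_det (d : aut_desc) : nat :=
  match d with AutD b c => b * c | AutG b => b * b | AutH b _ => b * b end.

Definition desc_trace (d : aut_desc) : nat :=
  match d with AutD b c => b + c | AutG b => b + b | AutH b _ => b + b end.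

Lemma Zp_natr_mulI m b (z : 'Z_m) :
  (1 < m)%N -> coprime m b -> b%:R * z = 0 -> z = 0.
Proof.
move=> m_gt1 co_mb bz0; apply: (mulrI (_ : b%:R \is a GRing.unit)).
  by rewrite unitZpE.
by rewrite bz0 mulr0.
Qed.

Section ZpSquareTimesZp.
Variable p : nat.
Hypothesis p_prime : prime p.

Let p_gt1 : (1 < p)%N := prime_gt1 p_prime.

Lemma eqZp_natr m n : (m%:R == n%:R :> 'Z_p) = (m == n %[mod p]).
Proof. by rewrite -val_eqE /= !val_Zp_nat. Qed.

Lemma sqrn_gt1 : (1 < p ^ 2)%N.
Proof. by rewrite (ltn_trans p_gt1) // -{1}[p]expn1 ltn_exp2l. Qed.

Lemma red_natr n : @red p n%:R = n%:R.
Proof.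
by rewrite /red /= val_Zp_nat ?sqrn_gt1 // -Zp_nat_mod // modn_dvdm ?Zp_nat_mod // dvdn_exp.
Qed.

Lemma red0 : @red p 0 = 0.
Proof. exact: red_natr 0. Qed.

Lemma red1 : @red p 1 = 1.
Proof. exact: red_natr 1. Qed.

Lemma redD x y : @red p (x + y) = red x + red y.
Proof. by rewrite -[x]natr_Zp -[y]natr_Zp -natrD !red_natr natrD. Qed.

Lemma redB x y : @red p (x - y) = red x - red y.
Proof. by rewrite -{2}(subrK y x) (redD (x - y)) addrK. Qed.

Lemma redM x y : @red p (x * y) = red x * red y.
Proof. by rewrite -[x]natr_Zp -[y]natr_Zp -natrM !red_natr natrM. Qed.

Lemma pmul_natr n : @pmul p n%:R = (p * n)%:R.
Proof.
by rewrite /pmul /= val_Zp_nat // muln_modr mulnn Zp_nat_mod ?sqrn_gt1.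
Qed.

Lemma pmulD y y' : @pmul p (y + y') = pmul y + pmul y'.
Proof. by rewrite -[y]natr_Zp -[y']natr_Zp -natrD !pmul_natr mulnDr natrD. Qed.

Lemma pmulB y y' : @pmul p (y - y') = pmul y - pmul y'.
Proof. by rewrite -{2}(subrK y' y) (pmulD (y - y')) addrK. Qed.

Lemma pmul0 : @pmul p 0 = 0.
Proof. by rewrite (pmul_natr 0) muln0. Qed.

Lemma red_pmul y : red (@pmul p y) = 0.
Proof. by rewrite -[y]natr_Zp pmul_natr red_natr natrM pchar_Zp // mul0r. Qed.

Lemma Ap_addE (x y : Ap p) : x + y = (x.1 + y.1, x.2 + y.2).
Proof. by []. Qed.

Lemma Ap_subE (x y : Ap p) : x - y = (x.1 - y.1, x.2 - y.2).
Proof. by []. Qed.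

Fact desc_fun_is_zmod_morphism d : zmod_morphism (@desc_fun p d).
Proof.
move=> x y; rewrite !Ap_subE.
case: d => [b c|b|b c] /=; congr (_, _); rewrite ?redB ?pmulB; ring.
Qed.
HB.instance Definition _ d :=
  GRing.isZmodMorphism.Build (Ap p) (Ap p) (@desc_fun p d) (desc_fun_is_zmod_morphism d).

Lemma coprime_small b : (0 < b < p)%N -> coprime p b.
Proof.
by case/andP=> b_gt0 b_lt_p; rewrite prime_coprime // gtnNdvd.
Qed.

Lemma desc_fun_inj d : valid_desc p d -> injective (@desc_fun p d).
Proof.
have coprime_sqr b : coprime p b -> coprime (p ^ 2) b by rewrite coprime_pexpl.
have mulI2 b z : coprime p b -> b%:R * z = 0 -> z = 0 :> 'Z_(p ^ 2).
  by move/coprime_sqr; apply: Zp_natr_mulI; rewrite sqrn_gt1.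
have mulI1 b z : coprime p b -> b%:R * z = 0 -> z = 0 :> 'Z_p by apply: Zp_natr_mulI.
move=> valid_d; apply: raddf_inj => -[z1 z2]; rewrite (_ : 0 = (0, 0)) //.
case: d valid_d => [b c [_ b_ndvd _ c_range]|b b_range|b c [b_range _]].
all: move=> /= /pair_equal_spec[].
- have co_b : coprime p b by rewrite prime_coprime // /dvdn.
  move=> /(mulI2 _ _ co_b) -> /(mulI1 _ _ (coprime_small _)) ->; first by [].
  by case/andP: c_range => /ltnW ->.
- have co_b : coprime p b by apply: coprime_small; case/andP: b_range => /ltnW ->.
  by move=> /(mulI2 _ _ co_b) ->; rewrite red0 add0r => /(mulI1 _ _ co_b) ->.
- have co_b := coprime_small b_range.
  move=> eq1 eq2; have : red (b%:R * z1 + pmul z2) = 0 by rewrite eq1 red0.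
  rewrite redD red_pmul addr0 redM red_natr.
  move/(mulI1 _ _ co_b) => red_z1; move: eq2; rewrite red_z1 mulr0 add0r.
  move/(mulI1 _ _ co_b) => z2_0; move: eq1; rewrite z2_0 pmul0 addr0.
  by move=> /(mulI2 _ _ co_b) ->.
Qed.

Definition e1 : Ap p := (1, 0).
Definition e2 : Ap p := (0, 1).

Lemma Ap_decomp (x : Ap p) : x = e1 *+ x.1 + e2 *+ x.2.
Proof.
by case: x => x1 x2; rewrite Ap_addE !pairMnE /= !mul0rn addr0 add0r !natr_Zp.
Qed.

Lemma e2Mp : e2 *+ p = 0.
Proof. by rewrite pairMnE /= mul0rn pchar_Zp. Qed.

(* Identifies the exterior square of Z_{p^2} x Z_p with Z_p. *)
Definition wedge (x y : Ap p) : 'Z_p := red x.1 * y.2 - x.2 * red y.1.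

Lemma wedgeBl x y z : wedge (x - y) z = wedge x z - wedge y z.
Proof. by rewrite /wedge /= redB; ring. Qed.

Lemma wedgeBr x y z : wedge x (y - z) = wedge x y - wedge x z.
Proof. by rewrite /wedge /= redB; ring. Qed.

Lemma wedge_xx x : wedge x x = 0.
Proof. by rewrite /wedge mulrC subrr. Qed.

Lemma wedge_e12 : wedge e1 e2 = 1.
Proof. by rewrite /wedge /= red0 red1 mulr0 subr0 mulr1. Qed.

Lemma wedge_natr x y : wedge x y = (x.1 * y.2 + p.-1 * (x.2 * y.1))%:R.
Proof.
have pred_p : p.-1%:R = -1 :> 'Z_p.
  by apply/eqP; rewrite -addr_eq0 natr1 prednK ?prime_gt0 ?pchar_Zp.
by rewrite natrD !natrM pred_p !natr_Zp /wedge /red; ring.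
Qed.

Lemma wedge_desc_fun d x y :
  wedge (desc_fun d x) (desc_fun d y) = (desc_det d)%:R * wedge x y.
Proof.
by case: d => [b c|b|b c]; rewrite /wedge /= ?(redD, redM, red_pmul, red_natr) ?natrM; ring.
Qed.

Lemma wedge_desc_fun_trace d :
  wedge (desc_fun d e1) e2 + wedge e1 (desc_fun d e2) = (desc_trace d)%:R.
Proof.
case: d => [b c|b|b c]; rewrite /wedge /= natrD.
all: by rewrite !(redD, redM, red_pmul, red_natr, red0, red1, pmul0); ring.
Qed.

Section PairingZpSquareTimesZp.
Variables (X : Type) (P : Ap p -> Ap p -> X -> X).
Hypothesis PDl : forall x y w z, P (x + y) w z = P y w (P x w z).
Hypothesis PDr : forall x y w z, P x (y + w) z = P x y (P x w z).
Hypothesis Pxx : forall x z, P x x z = z.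

Lemma pairing_e12_order z : iter p (P e1 e2) z = z.
Proof. by rewrite -(pairingMnr PDr Pxx) e2Mp (pairing0r PDr Pxx). Qed.

Lemma pairing_wedge x y z : P x y z = iter (wedge x y) (P e1 e2) z.
Proof.
set c := P e1 e2; have c_p := pairing_e12_order.
have c_iter_pred w : c (iter p.-1 c w) = w by rewrite -iterS prednK ?prime_gt0 ?c_p.
have P21 w : P e2 e1 w = iter p.-1 c w by rewrite -{1}(c_iter_pred w) (pairing_swapK PDl PDr Pxx).
rewrite wedge_natr val_Zp_nat // (iter_modn _ c_p) {1}[x]Ap_decomp {1}[y]Ap_decomp.
rewrite PDl !PDr !(pairingMn PDl PDr Pxx) !(iter_fix _ (Pxx _ _)) (eq_iter P21) -iterM -iterD.
by rewrite addnC [(p.-1 * _)%N]mulnC.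
Qed.

Lemma pairing_trivial d :
  (forall x y z, P (desc_fun d x) (desc_fun d y) z = P x y z) ->
  desc_det d != 1 %[mod p] -> forall x y z, P x y z = z.
Proof.
move=> P_f det_ne1; have c_p := pairing_e12_order.
have c_id : P e1 e2 =1 id.
  apply: (iter_prime_id p_prime c_p _ det_ne1) => z.
  rewrite -(iter_modn _ c_p) -[RHS]P_f pairing_wedge wedge_desc_fun wedge_e12 mulr1.
  by rewrite val_Zp_nat.
by move=> x y z; rewrite pairing_wedge (iter_fix _ (c_id z)).
Qed.

End PairingZpSquareTimesZp.

Lemma tau_AutH1_not_inj c : ~ injective (tau (@desc_fun p (AutH 1 c))).
Proof.
move=> tau_inj; have : ((p%:R, 0) : Ap p) = 0.
  apply: tau_inj; rewrite tau0 /tau Ap_subE /= red_natr pchar_Zp // pmul0.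
  by congr (_, _); ring.
move=> /(congr1 (fun x : Ap p => val x.1)) /=; rewrite val_Zp_nat ?sqrn_gt1 // modn_small.
  by move=> p0; move: p_gt1; rewrite p0.
by rewrite -{1}[p]expn1 ltn_exp2l.
Qed.

Lemma desc_fun_bij d : valid_desc p d -> bijective (@desc_fun p d).
Proof. by move/desc_fun_inj/injF_bij. Qed.

Lemma desc_tau_bij d :
  valid_desc p d -> qconnected (aff_op (@desc_fun p d)) -> bijective (tau (@desc_fun p d)).
Proof.
move=> valid_d conn; have [finv fK finvK] := desc_fun_bij valid_d.
by apply: surjF_bij => y; exact: (lt_orbit0_tau fK finvK (conn 0 y)).
Qed.

Lemma desc_neq_AutH1 d c :
  valid_desc p d -> qconnected (aff_op (@desc_fun p d)) -> d <> AutH 1 c.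
Proof.
move=> valid_d conn d_H1; have [tinv tK _] := desc_tau_bij valid_d conn.
by rewrite d_H1 in tK; apply: tau_AutH1_not_inj (can_inj tK).
Qed.

Lemma sc_conditionE d : valid_desc p d -> (forall c, d <> AutH 1 c) ->
  sc_condition p d <-> desc_det d != 1 %[mod p].
Proof.
case: d => [b c _ _|b b_range _|b c [/andP[b_gt0 b_lt_p] _] notH1] /=.
- by rewrite [(1 %% p)%N]modn_small.
- by rewrite sqrn_eq1_mod // mod0n.
- have b_gt1 : (1 < b)%N.
    by rewrite ltn_neqAle b_gt0 andbT; apply/eqP => b1; apply: (notH1 c); rewrite b1.
  by rewrite sqrn_eq1_mod ?b_gt1 // mod0n.
Qed.

Lemma desc_trace_neq2 d : valid_desc p d -> (forall c, d <> AutH 1 c) ->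
  desc_det d = 1 %[mod p] -> desc_trace d != 2 %[mod p].
Proof.
case: d => [b c [_ _ b_ne1 _]|b /andP[b_gt1 b_lt_p]|b c [/andP[_ b_lt_p] _]] notH1 /= det1;
  apply/eqP => /(det1_trace2 p_prime det1); rewrite [(1 %% p)%N]modn_small //.
- by move/eqP; rewrite (negbTE b_ne1).
- by rewrite modn_small // => b1; rewrite b1 in b_gt1.
- by rewrite modn_small // => b1; apply: (notH1 c); rewrite b1.
Qed.

Lemma desc_cocycle_trivial d :
  valid_desc p d -> qconnected (aff_op (@desc_fun p d)) -> desc_det d != 1 %[mod p] ->
  forall S (theta : Ap p -> Ap p -> S -> S),
  quandle_cocycle (aff_op (@desc_fun p d)) theta ->
  cohomologous_trivial (aff_op (@desc_fun p d)) theta.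
Proof.
move=> valid_d conn det_ne1 S theta [theta_bij theta_cocycle theta_xx].
have [finv fK finvK] := desc_fun_bij valid_d.
have [tinv tK tinvK] := desc_tau_bij valid_d conn.
have [theta_inv [thetaK theta_invK]] := bij_family_inv theta_bij.
apply: (cohomologous_trivial_of_tcomm fK finvK thetaK theta_invK theta_cocycle theta_xx
  tK tinvK).
apply: (pairing_trivial _ _ _ _ det_ne1).
- exact: tcommDl.
- exact: tcommDr.
- exact: tcommxx.
- exact: tcomm_f.
Qed.

Lemma wedge_cocycle_not_trivial d : valid_desc p d -> (forall c, d <> AutH 1 c) ->
  desc_det d = 1 %[mod p] ->
  quandle_cocycle (aff_op (@desc_fun p d)) (beta_cocycle wedge) /\
  ~ cohomologous_trivial (aff_op (@desc_fun p d)) (beta_cocycle wedge).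
Proof.
move=> valid_d notH1 det1.
have wedge_f x y : wedge (desc_fun d x) (desc_fun d y) = wedge x y.
  by rewrite wedge_desc_fun -Zp_nat_mod // det1 modn_small // mulr1n mul1r.
split; first exact: quandle_cocycle_beta wedgeBl wedgeBr wedge_xx wedge_f.
move/(cohomologous_trivial_beta wedgeBl wedgeBr wedge_xx wedge_f e1 e2)/eqP.
by rewrite wedge_desc_fun_trace wedge_e12 eqZp_natr; apply/negP/desc_trace_neq2.
Qed.

End ZpSquareTimesZp.

Theorem lemma3p17 (p : nat) (d : aut_desc) :
  prime p -> valid_desc p d ->
  qconnected (@aff_op (Ap p) (desc_fun d)) ->
  (simply_connected (@aff_op (Ap p) (desc_fun d)) <-> sc_condition p d).
Proof.
move=> p_prime valid_d conn.
have notH1 c : d <> AutH 1 c := desc_neq_AutH1 p_prime valid_d conn.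
rewrite (sc_conditionE p_prime valid_d notH1); split=> [[_ sc] | det_ne1].
- apply/negP => /eqP det1.
  have [wedge_cocycle wedge_not_trivial] := wedge_cocycle_not_trivial p_prime valid_d notH1 det1.
  exact/wedge_not_trivial/sc.
- by split=> //; apply: desc_cocycle_trivial.
Qed.
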